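(* Let $0<q<1$, $\Sigma\sim\mathrm{Mallows}(\mathbb{Z},q)$, $I_n:=\{-n,\dots,n\}$ and $J_n:=\{-n+1,\dots,n\}$. Almost surely there exists a (random) $N\in\mathbb{N}$ such that $\Sigma_{I_n}(i)=\Sigma_{J_n}(i)=\Sigma(i)$ for all $n\ge N$ and all $i$ with $|i|\le n-\log^2 n$.
   Context: For a finite set $A\subseteq\mathbb{Z}$ and a bijection $\pi:A\to A$, $\mathrm{inv}(\pi)$ is the number of pairs $i<j$ in $A$ with $\pi(i)>\pi(j)$, and $\Pi_A\sim\mathrm{Mallows}(A,q)$ means $\mathbb{P}(\Pi_A=\pi)\propto q^{\mathrm{inv}(\pi)}$ over bijections $\pi$ of $A$. For a bijection $\sigma$ of a set $B\subseteq\mathbb{Z}$ and finite $A\subseteq B$, the pattern $\sigma_A:A\to A$ is defined by $\sigma_A(a)=a_{(i)}$ when $\sigma(a)$ is the $i$-th smallest element of $\sigma[A]$, where $a_{(i)}$ is the $i$-th smallest element of $A$. For $0<q<1$, $\mathrm{Mallows}(\mathbb{Z},q)$ is Gnedin and Olshanski's bi-infinite Mallows measure: the law of a random bijection $\Sigma$ of $\mathbb{Z}$ such that $\Sigma_I\sim\mathrm{Mallows}(I,q)$ for every finite interval of integers $I$, and, almost surely for every $i\in\mathbb{Z}$ one has $\Sigma_{I_n}(i)=\Sigma(i)$ for all sufficiently large $n$. It is also known that $\mathbb{P}(|\Sigma(i)-i|>m)=\Theta(q^m)$ uniformly in $i\in\mathbb{Z}$. *)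

From HB Require Import structures.
From mathcomp Require Import all_boot all_order all_algebra all_fingroup.
From mathcomp Require Import all_classical all_reals all_analysis.
Set Implicit Arguments. Unset Strict Implicit. Unset Printing Implicit Defensive.
Import Order.TTheory GRing.Theory Num.Theory.
Local Open Scope ring_scope.

Definition zintv (a : int) (n : nat) : seq int :=
  [seq a + (k%:Z) | k <- iota 0 n].

(* Pattern sigma_A of sigma on A = zintv a n:
   sigma_A(x) = a_(i) where sigma(x) is the i-th smallest element of sigma[A];
   since A is an interval, a_(i) = a + (i-1) = a + #{y in A | sigma y < sigma x}. *)
Definition pattern (s : int -> int) (a : int) (n : nat) (x : int) : int :=
  a + (count (fun y => s y < s x) (zintv a n))%:Z.

Definition inv_count (n : nat) (p : 'S_n) : nat :=
  #|[set ij : 'I_n * 'I_n | (ij.1 < ij.2)%N && (p ij.2 < p ij.1)%N]|.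

(* Mallows(I,q) probability of pi, for I = zintv a n identified with 'I_n
   via k |-> a + k (order preserving). *)
Definition mallows_prob (R : realType) (q : R) (n : nat) (p : 'S_n) : R :=
  q ^+ inv_count p / \sum_(p' : 'S_n) q ^+ inv_count p'.

From HB Require Import structures.
From mathcomp Require Import all_boot all_order all_algebra all_fingroup.
From mathcomp Require Import all_classical all_reals all_analysis.
From mathcomp Require Import zify ring lra.
Set Implicit Arguments. Unset Strict Implicit. Unset Printing Implicit Defensive.
Import Order.TTheory GRing.Theory Num.Theory.
Local Open Scope ring_scope.

(* Under Mallows(q) on a window, the first value of the pattern is at least t
   with probability at most q^t: lowering it by t removes exactly t inversions.
   By the reverse-complement symmetry the same holds for the last value, so two
   points at distance k are inverted by Sigma with probability O(q^(k/2)).  Let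
   F_m be the event that -m or m + 1 is inverted with a point of [-m, m + 1] at
   distance at least ln(m)^2 / 4; then P(F_m) = O(m q^(ln(m)^2 / 8)) is summable
   and, by Borel-Cantelli, almost surely only finitely many F_m occur.  Outside
   F_m, for m >= n and |i| <= n - ln(n)^2 we get Sigma(-m) < Sigma(i) < Sigma(m+1),
   so enlarging the window I_m to I_(m+1) does not change the pattern at i.  The
   patterns at i are therefore constant from I_n on, hence equal to their limit
   Sigma(i), and J_n only drops the point -n, which lies below i. *)

Section CycleDown.
Variable n : nat.

Definition cycle_down_fun (v t : nat) (u : 'I_n) : nat :=
  if (u : nat) == v then (v - t)%N else if (v - t <= u < v)%N then u.+1 else u.

Lemma cycle_down_fun_lt (v : 'I_n) t u : (cycle_down_fun v t u < n)%N.
Proof.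
rewrite /cycle_down_fun; have := ltn_ord u; have := ltn_ord v.
by case: eqP => [->|_]; [lia | case: ifP; lia].
Qed.

Lemma cycle_down_inj (v : 'I_n) t :
  injective (fun u => Ordinal (cycle_down_fun_lt v t u)).
Proof.
move=> u1 u2 /(congr1 val) /=; rewrite /cycle_down_fun => E; apply/val_inj => /=.
move: E; case: (eqVneq (u1 : nat) v); case: (eqVneq (u2 : nat) v);
  (try case: ifP); (try case: ifP); lia.
Qed.

Definition cycle_down (v : 'I_n) t : 'S_n := perm (@cycle_down_inj v t).

Lemma cycle_down_val (v : 'I_n) t : (cycle_down v t v : nat) = (v - t)%N.
Proof. by rewrite permE /= /cycle_down_fun eqxx. Qed.

Lemma cycle_down_mono (v : 'I_n) t (u1 u2 : 'I_n) : u1 != v -> u2 != v ->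
  ((cycle_down v t u1 : nat) < cycle_down v t u2)%N = (u1 < u2)%N.
Proof.
rewrite !permE /= /cycle_down_fun => /eqP h1 /eqP h2.
have {}h1 : (u1 : nat) <> v by move/val_inj.
have {}h2 : (u2 : nat) <> v by move/val_inj.
rewrite (introF eqP h1) (introF eqP h2).
by case: ifP => ?; case: ifP => ?; apply/idP/idP; lia.
Qed.

End CycleDown.

Lemma card_ord_lt n v : (v <= n)%N -> #|[set u : 'I_n | (u < v)%N]| = v.
Proof.
move=> vn; have -> : [set u : 'I_n | (u < v)%N] = widen_ord vn @: [set: 'I_v].
  apply/setP => u; rewrite inE; apply/idP/imsetP => [uv|[x _ ->]].
    by exists (Ordinal uv) => //; apply/val_inj.
  by rewrite /= ltn_ord.
rewrite card_imset ?cardsT ?card_ord //.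
by move=> x y /(congr1 val) /= xy; apply/val_inj.
Qed.

(* The inversions [(ord0, j)] correspond to the [p ord0] values below [p ord0]. *)
Lemma inv_count_head n (p : 'S_n.+1) : inv_count p =
  (p ord0 + #|[set ij : 'I_n.+1 * 'I_n.+1 |
               [&& (0 < ij.1)%N, (ij.1 < ij.2)%N & (p ij.2 < p ij.1)%N]]|)%N.
Proof.
rewrite /inv_count -(cardsID [set ij : 'I_n.+1 * 'I_n.+1 | ij.1 == ord0]).
congr (_ + _)%N; last first.
  by apply: eq_card => -[i j]; rewrite !inE /= -lt0n.
have -> : [set ij : 'I_n.+1 * 'I_n.+1 | (ij.1 < ij.2)%N && (p ij.2 < p ij.1)%N]
      :&: [set ij | ij.1 == ord0]
    = (pair ord0) @: (p @^-1: [set u : 'I_n.+1 | (u < p ord0)%N]).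
  apply/setP => -[i j]; rewrite !inE /=; apply/idP/imsetP.
    by case/andP=> /andP[_ pji] /eqP i0; subst i; exists j; rewrite ?inE.
  case=> x; rewrite !inE => px [-> ->]; rewrite eqxx px !andbT lt0n.
  by apply: contraTneq px => x0; rewrite (_ : x = ord0) ?ltnn //; exact: val_inj.
rewrite card_imset; last by move=> x y [].
by rewrite card_preimset ?card_ord_lt 1?ltnW //; exact: perm_inj.
Qed.

Lemma inv_count_cycle_down n (p : 'S_n.+1) t : (t <= p ord0)%N ->
  (inv_count (p * cycle_down (p ord0) t)%g + t = inv_count p)%N.
Proof.
move=> tp; rewrite !inv_count_head permM cycle_down_val.
set A := #|_|; set B := #|_|; suff -> : A = B by lia.
apply: eq_card => -[i j]; rewrite !inE /= !permM.
case: (ltnP 0 i) => //= i0; case: (ltnP i j) => //= ij.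
have ne0 (k : 'I_n.+1) : (0 < k)%N -> p k != p ord0.
  by move=> k0; rewrite (inj_eq perm_inj) -(inj_eq val_inj) /= -lt0n.
by rewrite cycle_down_mono ?ne0 //; exact: leq_ltn_trans ij.
Qed.

Lemma sum_head_ge (R : realFieldType) (q : R) (q0 : 0 <= q) n t :
  \sum_(p : 'S_n.+1 | (t <= p ord0)%N) q ^+ inv_count p <=
  q ^+ t * \sum_(p : 'S_n.+1) q ^+ inv_count p.
Proof.
pose F (p : 'S_n.+1) := (p * cycle_down (p ord0) t)%g.
pose A := [set p : 'S_n.+1 | (t <= p ord0)%N].
have -> : \sum_(p : 'S_n.+1 | (t <= p ord0)%N) q ^+ inv_count p =
    q ^+ t * \sum_(p in A) q ^+ inv_count (F p).
  rewrite mulr_sumr; apply: eq_big => [p|p tp]; first by rewrite inE.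
  by rewrite -exprD addnC inv_count_cycle_down.
have F_inj : {in A &, injective F}.
  move=> p1 p2; rewrite !inE => t1 t2 E.
  have := congr1 (fun s : 'S_n.+1 => val (s ord0)) E.
  rewrite /= !permM !cycle_down_val => E0.
  have E1 : p1 ord0 = p2 ord0 by apply/val_inj => /=; lia.
  by move: E; rewrite /F E1 => /mulIg.
rewrite ler_wpM2l ?exprn_ge0 // -(big_imset (fun s => q ^+ inv_count s) F_inj) /=.
rewrite [leRHS](bigID (mem (F @: A))) /= lerDl.
by apply: sumr_ge0 => p _; exact: exprn_ge0.
Qed.

Section ReverseComplement.
Variable n : nat.

Definition rev_compl_fun (p : 'S_n) (j : 'I_n) : 'I_n := rev_ord (p (rev_ord j)).

Lemma rev_compl_inj p : injective (rev_compl_fun p).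
Proof. by move=> x y /rev_ord_inj /perm_inj /rev_ord_inj. Qed.

Definition rev_compl p : 'S_n := perm (@rev_compl_inj p).

Lemma rev_complE p j : rev_compl p j = rev_ord (p (rev_ord j)).
Proof. by rewrite permE. Qed.

Lemma rev_complK : involutive rev_compl.
Proof. by move=> p; apply/permP => j; rewrite !rev_complE !rev_ordK. Qed.

Lemma inv_count_rev_compl p : inv_count (rev_compl p) = inv_count p.
Proof.
pose g (ij : 'I_n * 'I_n) := (rev_ord ij.2, rev_ord ij.1).
have gK : involutive g by move=> [i j]; rewrite /g /= !rev_ordK.
rewrite /inv_count -(card_imset _ (can_inj gK)); apply: eq_card => -[i j].
rewrite inE /=; apply/imsetP/idP.
  case=> -[i' j']; rewrite !inE /= !rev_complE /= => /andP[ij pij] [-> ->] /=.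
  have := ltn_ord j'; have := ltn_ord (p (rev_ord i')).
  have := ltn_ord (p (rev_ord j')); move=> *; apply/andP; split; lia.
move=> /andP[ij pij]; exists (g (i, j)); last by rewrite gK.
rewrite !inE /= !rev_complE !rev_ordK /=.
have := ltn_ord j; have := ltn_ord (p i); have := ltn_ord (p j).
by move=> *; apply/andP; split; lia.
Qed.

End ReverseComplement.

Lemma sum_last_le (R : realFieldType) (q : R) (q0 : 0 <= q) n t : (t <= n)%N ->
  \sum_(p : 'S_n.+1 | (p ord_max <= n - t)%N) q ^+ inv_count p <=
  q ^+ t * \sum_(p : 'S_n.+1) q ^+ inv_count p.
Proof.
have rcK := can_inj (@rev_complK n.+1).
move=> tn; rewrite (reindex_inj rcK) [in leRHS](reindex_inj rcK) /=.
under [X in _ <= _ * X]eq_bigr do rewrite inv_count_rev_compl.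
rewrite (eq_big (fun p : 'S_n.+1 => t <= p ord0)%N
                (fun p => q ^+ inv_count p)); first exact: sum_head_ge.
  move=> p; rewrite rev_complE (_ : rev_ord ord_max = ord0); last first.
    by apply/val_inj => /=; lia.
  by rewrite /=; have := ltn_ord (p ord0); lia.
by move=> p _; rewrite inv_count_rev_compl.
Qed.

Lemma mallows_weight_gt0 (R : realFieldType) (q : R) (q0 : 0 < q) n :
  0 < \sum_(p : 'S_n) q ^+ inv_count p.
Proof.
rewrite (bigD1 1%g) //= ltr_pwDl ?exprn_gt0 //.
by apply: sumr_ge0 => p _; rewrite exprn_ge0 // ltW.
Qed.

Lemma mallows_head_ge (R : realType) (q : R) (q0 : 0 < q) n t :
  \sum_(p : 'S_n.+1 | (t <= p ord0)%N) mallows_prob q p <= q ^+ t.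
Proof.
rewrite /mallows_prob -mulr_suml ler_pdivrMr ?mallows_weight_gt0 //.
by apply: sum_head_ge; rewrite ltW.
Qed.

Lemma mallows_last_le (R : realType) (q : R) (q0 : 0 < q) n t : (t <= n)%N ->
  \sum_(p : 'S_n.+1 | (p ord_max <= n - t)%N) mallows_prob q p <= q ^+ t.
Proof.
move=> tn; rewrite /mallows_prob -mulr_suml ler_pdivrMr ?mallows_weight_gt0 //.
by apply: sum_last_le; rewrite ?ltW.
Qed.

Lemma count_lt_subpred (I : eqType) (s : seq I) (f g : pred I) x :
  subpred f g -> x \in s -> g x -> ~~ f x -> (count f s < count g s)%N.
Proof.
move=> fg; elim: s => [|y s IH] //=; rewrite inE => /orP [/eqP <-|xs] gx fx.
  by rewrite gx (negbTE fx) add0n add1n ltnS; exact: sub_count.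
have := IH xs gx fx; case fy : (f y); first by rewrite (fg _ fy); lia.
by case: (g y) => /=; lia.
Qed.

Lemma zintv_mem a n (k : 'I_n) : a + (k : nat)%:Z \in zintv a n.
Proof. by apply/mapP; exists (k : nat); rewrite // mem_iota add0n ltn_ord. Qed.

Section PatternPerm.
Variables (s : int -> int) (a : int) (n : nat).
Hypothesis s_inj : injective s.

Let rank (k : 'I_n) : nat :=
  count (fun y => s y < s (a + (k : nat)%:Z)) (zintv a n).

Lemma rank_lt (k : 'I_n) : (rank k < n)%N.
Proof.
have := count_predC (fun y => s y < s (a + (k : nat)%:Z)) (zintv a n).
rewrite size_map size_iota /rank => E.
suff : (0 < count (predC (fun y => s y < s (a + (k : nat)%:Z))%R) (zintv a n))%N by lia.
by rewrite -has_count; apply/hasP; exists (a + (k : nat)%:Z); rewrite ?zintv_mem //= ltxx.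
Qed.

Lemma rank_mono (k1 k2 : 'I_n) :
  s (a + (k1 : nat)%:Z) < s (a + (k2 : nat)%:Z) -> (rank k1 < rank k2)%N.
Proof.
move=> lt12; apply: (count_lt_subpred (x := a + (k1 : nat)%:Z)); rewrite ?zintv_mem //=.
- by move=> y /= /lt_trans; apply.
- by rewrite ltxx.
Qed.

Lemma rank_inj : injective (fun k => Ordinal (rank_lt k)).
Proof.
move=> k1 k2 [] E; apply/eqP; apply: contraT => ne.
have : s (a + (k1 : nat)%:Z) != s (a + (k2 : nat)%:Z).
  by rewrite (inj_eq s_inj) (inj_eq (addrI a)) eqz_nat (inj_eq val_inj).
by case/lt_total/orP => /rank_mono; rewrite E ltnn.
Qed.

Definition pattern_perm : 'S_n := perm rank_inj.

Lemma pattern_permE (k : 'I_n) :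
  pattern s a n (a + (k : nat)%:Z) = a + (pattern_perm k : nat)%:Z.
Proof. by rewrite permE. Qed.

Lemma pattern_perm_mono (k1 k2 : 'I_n) :
  s (a + (k1 : nat)%:Z) < s (a + (k2 : nat)%:Z) ->
  (pattern_perm k1 < pattern_perm k2)%N.
Proof. by rewrite !permE; exact: rank_mono. Qed.

End PatternPerm.

Section WindowPatterns.
Variable s : int -> int.

Lemma zintv_cons a n : zintv a n.+1 = a :: zintv (a + 1) n.
Proof.
rewrite /zintv /= addr0; congr cons.
by rewrite -[1%N]addn0 iotaDl -map_comp; apply: eq_map => k /=; lia.
Qed.

Lemma zintv_rcons a n : zintv a n.+1 = rcons (zintv a n) (a + n%:Z).
Proof. by rewrite /zintv -addn1 iotaD map_cat /= cats1 add0n. Qed.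

Lemma pattern_cons a n i : s a < s i -> pattern s a n.+1 i = pattern s (a + 1) n i.
Proof. by move=> ai; rewrite /pattern zintv_cons /= ai; lia. Qed.

Lemma pattern_rcons a n i : s i < s (a + n%:Z) ->
  pattern s a n.+1 i = pattern s a n i.
Proof.
move=> ia; rewrite /pattern zintv_rcons -cats1 count_cat /=.
by rewrite ltNge (ltW ia) /= !addn0.
Qed.

Lemma pattern_J_I n i : s (- n%:Z) < s i ->
  pattern s (1 - n%:Z) (2 * n) i = pattern s (- n%:Z) (2 * n).+1 i.
Proof. by move=> ni; rewrite pattern_cons // addrC. Qed.

Lemma pattern_I_succ m i : s (- m.+1%:Z) < s i -> s i < s (m%:Z + 1) ->
  pattern s (- m.+1%:Z) (2 * m.+1).+1 i = pattern s (- m%:Z) (2 * m).+1 i.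
Proof.
move=> li ir; rewrite pattern_cons // (_ : - m.+1%:Z + 1 = - m%:Z); last by lia.
rewrite (_ : (2 * m.+1 = (2 * m).+2)%N); last by lia.
by rewrite pattern_rcons // (_ : - m%:Z + (2 * m).+1%:Z = m%:Z + 1) //; lia.
Qed.

Lemma pattern_window_limit n i :
  (forall m, (n <= m)%N -> s (- m%:Z) < s i < s (m%:Z + 1)) ->
  (exists M, forall m, (M <= m)%N -> pattern s (- m%:Z) (2 * m).+1 i = s i) ->
  pattern s (- n%:Z) (2 * n).+1 i = s i /\ pattern s (1 - n%:Z) (2 * n) i = s i.
Proof.
move=> sep [M lim].
have stable m : (n <= m)%N ->
    pattern s (- m%:Z) (2 * m).+1 i = pattern s (- n%:Z) (2 * n).+1 i.
  elim: m => [|m IH] nm; first by rewrite (_ : n = 0%N) //; lia.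
  have [->|nm'] := eqVneq n m.+1; first by [].
  have {nm'} nm' : (n <= m)%N by lia.
  rewrite pattern_I_succ ?IH //.
  - by case/andP: (sep m.+1 nm).
  - by case/andP: (sep m nm').
have In : pattern s (- n%:Z) (2 * n).+1 i = s i.
  by rewrite -(stable (maxn M n)) ?leq_maxr // lim // leq_maxl.
split=> //; rewrite pattern_J_I ?In //.
by case/andP: (sep n (leqnn n)).
Qed.

End WindowPatterns.

Section RealBounds.
Variable R : realType.

Lemma expr_le_expR_ln (q : R) (e : nat) (x : R) : 0 < q -> q <= 1 -> x <= e%:R ->
  q ^+ e <= expR (ln q * x).
Proof.
move=> q0 q1 xe; rewrite -{1}(lnK (x := q)) ?posrE // -expRM_natl ler_expR.
by rewrite mulrC ler_wnM2l // ln_le0.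
Qed.

Lemma ln_natr_unbounded (C : R) :
  exists M : nat, forall m : nat, (M <= m)%N -> C <= ln (m%:R : R).
Proof.
exists (Num.truncn (expR C)).+1 => m Mm.
have Cm : expR C < m%:R.
  by apply: lt_le_trans (truncnS_gt _) _; rewrite ler_nat.
rewrite -[leLHS]expRK ler_ln ?posrE ?expR_gt0 ?(lt_trans (expR_gt0 C)) //.
exact: ltW.
Qed.

Definition log_gap (m : nat) : R := ln (m%:R : R) ^+ 2 / 4.

(* If [n <= m] and [ln m <= 2 ln n] this is immediate; otherwise
   [m - n >= m - sqrt m >= ln m ^ 2 / 4] via [1 + ln s <= s] at [s = sqrt m]. *)
Lemma log_gap_le (n m : nat) : (1 <= n)%N -> (n <= m)%N ->
  log_gap m <= m%:R - n%:R + ln (n%:R : R) ^+ 2.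
Proof.
move=> n1 nm; rewrite /log_gap.
have n_pos : (n%:R : R) \is Num.pos by rewrite posrE ltr0n.
have m_pos : (m%:R : R) \is Num.pos by rewrite posrE ltr0n (leq_trans n1).
have nm' : (n%:R : R) <= m%:R by rewrite ler_nat.
set a := ln (n%:R : R); set b := ln (m%:R : R).
have a0 : 0 <= a by rewrite ln_ge0 // ler1n.
have ab : a <= b by rewrite ler_ln.
case: (leP b (2 * a)) => h.
  have h2 : b * b <= 4 * (a * a) by nra.
  by rewrite !expr2; nra.
set s := expR (b / 2).
have lns : ln s = b / 2 by rewrite /s expRK.
have s2 : s ^+ 2 = m%:R.
  by rewrite /s -expRM_natl mulrC -mulrA mulVf ?pnatr_eq0 // mulr1 /b lnK.
have ns : n%:R < s by rewrite -(lnK n_pos) /s ltr_expR -/a; lra.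
have hs : 1 + ln s <= s by have := expR_ge1Dx (ln s); rewrite lnK // posrE expR_gt0.
by rewrite lns in hs; rewrite -s2 !expr2; nra.
Qed.

Lemma log_gap_le_dist (n m : nat) (i : int) : (2 <= n)%N -> (n <= m)%N ->
  (`|i|%:~R : R) <= n%:R - ln (n%:R : R) ^+ 2 ->
  [/\ `|i| < m%:Z, log_gap m <= (i + m%:Z)%:~R & log_gap m <= (m%:Z + 1 - i)%:~R].
Proof.
move=> n2 nm hi.
have ln2 : 0 < ln (n%:R : R) ^+ 2 by rewrite exprn_gt0 // ln_gt0 // ltr1n.
have gap := log_gap_le (ltnW n2) nm.
have mn : (n%:R : R) <= m%:R by rewrite ler_nat.
have il : - (`|i|%:~R : R) <= i%:~R by rewrite -rmorphN ler_int lerNl -normrN ler_norm.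
have ir : (i%:~R : R) <= `|i|%:~R by rewrite ler_int ler_norm.
rewrite -(ltr_int R) !(intrD, intrN) /=; split; lra.
Qed.

Lemma telescope_sum (K : R) n :
  \sum_(0 <= k < n) K / (k.+1%:R * k.+2%:R) = K - K / n.+1%:R.
Proof.
elim: n => [|n IH]; first by rewrite big_nil divr1 subrr.
rewrite big_nat_recr //= IH -[n.+2]addn1 -[n.+1]addn1 !natrD.
have h1 : (n%:R + 1 : R) != 0 by rewrite natr1 pnatr_eq0.
have h2 : (n%:R + 1 + 1 : R) != 0 by rewrite !natr1 pnatr_eq0.
by field; rewrite h1 h2.
Qed.

Lemma nneseries_telescope_lt_pinfty (K : R) (u : (\bar R)^nat) :
  (forall m, 0 <= u m)%E -> (forall m, u m <= (K / (m.+1%:R * m.+2%:R))%:E)%E ->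
  (\sum_(m <oo) u m < +oo)%E.
Proof.
move=> u0 uK; apply: (@le_lt_trans _ _ K%:E); last exact: ltry.
have v0 m : 0 <= K / (m.+1%:R * m.+2%:R) :> R.
  by rewrite -lee_fin; exact: le_trans (u0 m) (uK m).
apply: le_trans (lee_nneseries (P := xpredT) (N := 0%N)
  (fun m _ _ => u0 m) (fun m _ => uK m)) _.
apply: lime_le; first by apply: is_cvg_nneseries => m _ _; rewrite lee_fin.
apply: nearW => n; rewrite /= sumEFin lee_fin telescope_sum gerBl //.
by move: (v0 0%N); rewrite pmulr_lge0 ?invr_gt0 ?mulr_gt0 // => K0; rewrite divr_ge0.
Qed.

Lemma min_decay_le_telescope (q : R) : 0 < q -> q < 1 ->
  exists K : R, forall m : nat,
  Num.min 1 (8 * m.+1%:R * expR (ln q * (log_gap m / 2)))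
    <= K / (m.+1%:R * m.+2%:R).
Proof.
move=> q0 q1; set c := - ln q.
have c0 : 0 < c by rewrite /c oppr_gt0 ln_lt0 // q0.
have [M HM] := ln_natr_unbounded (32 / c).
exists (96 + ((maxn M 1).+1 * (maxn M 1).+2)%:R) => m.
have D0 : 0 < (m.+1%:R * m.+2%:R : R) by rewrite mulr_gt0 ?ltr0Sn.
rewrite ler_pdivlMr //; case: (ltnP m (maxn M 1)) => hm.
  apply: le_trans (_ : 1 * (m.+1%:R * m.+2%:R) <= _).
    by apply: ler_wpM2r; [exact: ltW | rewrite ge_min lexx].
  rewrite mul1r -natrM; apply: le_trans (_ : _ <= ((maxn M 1).+1 * (maxn M 1).+2)%:R) _.
    by rewrite ler_nat; apply: leq_mul; lia.
  by rewrite lerDr.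
have m1 : (1 <= m)%N by apply: leq_trans hm; rewrite leq_maxr.
have cL : 32 <= c * ln (m%:R : R).
  by have := HM m (leq_trans (leq_maxl _ _) hm); rewrite ler_pdivrMr // mulrC.
set x := (m%:R : R).
have x1 : 1 <= x by rewrite ler1n.
have L0 : 0 <= ln x by rewrite ln_ge0.
have E4 : expR (ln q * (log_gap m / 2)) <= (x ^+ 4)^-1.
  have -> : (x ^+ 4)^-1 = expR (- (4%:R * ln x)).
    by rewrite expRN expRM_natl lnK // posrE (lt_le_trans ltr01).
  have qc : ln q = - c by rewrite opprK.
  have := ler_wpM2r L0 cL.
  by rewrite ler_expR /log_gap -/x qc !expr2; nra.
have S1 : m.+1%:R = x + 1 by rewrite natr1.
have S2 : m.+2%:R = x + 2 by rewrite -addn2 natrD.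
rewrite S1 S2.
apply: le_trans (_ : 8 * (x + 1) * (x ^+ 4)^-1 * ((x + 1) * (x + 2)) <= _).
  apply: ler_wpM2r.
    by rewrite mulr_ge0 ?addr_ge0 ?ler0n.
  rewrite ge_min; apply/orP; right.
  by apply: ler_wpM2l; rewrite ?mulr_ge0 ?addr_ge0 ?ler0n.
rewrite mulrAC ler_pdivrMr ?exprn_gt0 ?(lt_le_trans ltr01) //.
set N : R := ((maxn M 1).+1 * (maxn M 1).+2)%:R.
have N0 : 0 <= N by rewrite ler0n.
rewrite !exprS expr0 mulr1.
have x2 : 1 <= x * x by nra.
have x3 : x * x <= x * (x * x) by nra.
have x4 : x * (x * x) <= x * (x * (x * x)) by nra.
have : 0 <= N * (x * (x * (x * x))) by apply: mulr_ge0 => //; lra.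
nra.
Qed.

End RealBounds.

Local Open Scope classical_set_scope.

Lemma measure_bigsetU_le d (T : ringOfSetsType d) (R : realFieldType)
    (mu : {content set T -> \bar R}) (I : Type) (r : seq I) (Pr : pred I)
    (F : I -> set T) :
  (forall i, measurable (F i)) ->
  (mu (\big[setU/set0]_(i <- r | Pr i) F i) <= \sum_(i <- r | Pr i) mu (F i))%E.
Proof.
move=> mF; elim: r => [|i r IH]; first by rewrite !big_nil measure0.
rewrite !big_cons; case: ifP => _ //.
apply: le_trans (leeD2l _ IH).
by apply: measureU2 => //; exact: bigsetU_measurable.
Qed.

Lemma ae_eventually_notin d (T : measurableType d) (R : realType)
    (mu : {measure set T -> \bar R}) (F : (set T)^nat) :
  (forall k, measurable (F k)) -> (\sum_(n <oo) mu (F n) < +oo)%E ->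
  {ae mu, forall w, exists n0, forall m, (n0 <= m)%N -> ~ F m w}.
Proof.
move=> mF sumF; exists (lim_sup_set F); split; first 2 last.
- move=> w /= not_ev n _; apply: contrapT => nF; apply: not_ev.
  by exists n => m nm Fm; apply: nF; exists m.
- by apply: bigcap_measurable => // k _; apply: bigcup_measurable => j _.
- exact: lim_sup_set_cvg0.
Qed.

Section IntValued.
Variables (d : measure_display) (T : measurableType d).

Lemma measurable_lt_int (X Y : T -> int) :
  (forall j, measurable [set w | X w = j]) ->
  (forall j, measurable [set w | Y w = j]) ->
  measurable [set w | X w < Y w].
Proof.
move=> mX mY; have -> : [set w | X w < Y w] = \bigcup_(u : int) \bigcup_(v : int)
    (if u < v then [set w | X w = u] `&` [set w | Y w = v] else set0).
  apply/seteqP; split => w /=; first by move=> XY; exists (X w) => //;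
    exists (Y w) => //; rewrite XY.
  by move=> [u _ [v _]]; case: ifP => // uv [/= -> ->].
apply: countable_bigcupT_measurable => [|u]; first exact: countableP.
apply: countable_bigcupT_measurable => [|v]; first exact: countableP.
by case: ifP => _ //; exact: measurableI.
Qed.

Lemma measurable_count (I : Type) (s : seq I) (f : I -> T -> bool) c :
  (forall y, measurable [set w | f y w]) ->
  measurable [set w | count (f^~ w) s = c].
Proof.
move=> mf; elim: s c => [|y s IH] c /=.
  case: c => [|c].
    by rewrite (_ : [set _ | _] = setT) //; apply/seteqP; split.
  by rewrite (_ : [set _ | _] = set0) //; apply/seteqP; split.
have -> : [set w | (f y w + count (f^~ w) s)%N = c] =
    ([set w | f y w] `&` [set w | (count (f^~ w) s).+1 = c]) `|`
    (~` [set w | f y w] `&` [set w | count (f^~ w) s = c]).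
  apply/seteqP; split => w /=.
    by case: (f y w) => /= H; [left | right].
  by case=> [[-> <-]|[/negP /negbTE -> ->]].
apply: measurableU; apply: measurableI; [by [] | | exact: measurableC | exact: IH].
case: c => [|c]; first by rewrite (_ : [set _ | _] = set0) //; apply/seteqP; split.
rewrite (_ : [set _ | _] = [set w | count (f^~ w) s = c]) //.
by apply/seteqP; split => w /= => [[]|->].
Qed.

End IntValued.

Lemma int_between_natz (j : int) n :
  0 < j < n%:Z -> exists2 k : nat, k%:Z = j & (0 < k < n)%N.
Proof. by move=> jn; exists `|j|%N; lia. Qed.

Section WindowEvents.
Variables (R : realType) (d : measure_display) (T : measurableType d)
  (Sigma : T -> int -> int).
Hypothesis Sigma_inj : forall w, injective (Sigma w).
Hypothesis Sigma_meas : forall i j : int, measurable [set w | Sigma w i = j].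

Definition pattern_event (a : int) (n : nat) (p : 'S_n) : set T :=
  [set w | forall k : 'I_n,
     pattern (Sigma w) a n (a + (k : nat)%:Z) = a + (p k : nat)%:Z].
Arguments pattern_event : clear implicits.

Lemma measurable_pattern_event a n p : measurable (pattern_event a n p).
Proof.
have -> : pattern_event a n p = \big[setI/setT]_(k <- enum 'I_n)
    [set w | count (fun y => Sigma w y < Sigma w (a + (k : nat)%:Z)) (zintv a n)
             = p k].
  rewrite -bigcap_seq; apply/seteqP; split => w /= ev k.
    by move=> _; move: (ev k) => /addrI [].
  by rewrite /pattern (ev k) //= mem_enum.
apply: bigsetI_measurable => k _; apply: measurable_count => y.
by apply: measurable_lt_int.
Qed.

Definition head_ge_event a n t : set T :=
  \big[setU/set0]_(p : 'S_n.+1 | (t <= p ord0)%N) pattern_event a n.+1 p.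

Definition last_le_event a n t : set T :=
  \big[setU/set0]_(p : 'S_n.+1 | (p ord_max <= n - t)%N) pattern_event a n.+1 p.

Lemma measurable_head_ge_event a n t : measurable (head_ge_event a n t).
Proof. by apply: bigsetU_measurable => p _; exact: measurable_pattern_event. Qed.

Lemma measurable_last_le_event a n t : measurable (last_le_event a n t).
Proof. by apply: bigsetU_measurable => p _; exact: measurable_pattern_event. Qed.

Definition inversion (a : int) (n : nat) : set T :=
  [set w | Sigma w (a + n%:Z) < Sigma w a].

Lemma inversion_sub a n h : (0 < h <= n.+1)%N ->
  inversion a n `<=` head_ge_event a n h `|` last_le_event a n (n.+1 - h).
Proof.
move=> h_range w inv; set p := pattern_perm a n.+1 (@Sigma_inj w).
have ev : pattern_event a n.+1 p w by move=> k; exact: pattern_permE.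
have : (p ord_max < p ord0)%N by apply: pattern_perm_mono; rewrite /= addr0.
case: (leqP h (p ord0)) => ph pmax.
  by left; rewrite /head_ge_event -bigcup_seq_cond; exists p; rewrite //= mem_index_enum.
right; rewrite /last_le_event -bigcup_seq_cond; exists p => //=.
by rewrite mem_index_enum /=; lia.
Qed.

Lemma measurable_inversion a n : measurable (inversion a n).
Proof. exact: measurable_lt_int. Qed.

(* Inversions of [-m], or of [m + 1], with a point of [[-m, m + 1]] at distance
   at least [log_gap m]. *)
Definition far_inversion (m : nat) : set T :=
  \big[setU/set0]_(k < (2 * m).+2 | log_gap R m <= (k : nat)%:R)
     (inversion (- m%:Z) k `|` inversion (m%:Z + 1 - (k : nat)%:Z) k).

Lemma measurable_far_inversion m : measurable (far_inversion m).
Proof.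
by apply: bigsetU_measurable => k _; apply: measurableU; exact: measurable_inversion.
Qed.

Lemma not_far_inversion_separates m w (i : int) : ~ far_inversion m w ->
  `|i| < m%:Z -> log_gap R m <= (i + m%:Z)%:~R ->
  log_gap R m <= (m%:Z + 1 - i)%:~R ->
  Sigma w (- m%:Z) < Sigma w i < Sigma w (m%:Z + 1).
Proof.
move=> nfar im gap_l gap_r.
have no_inv (k : nat) a : (k < (2 * m).+2)%N -> log_gap R m <= k%:R ->
    a = - m%:Z \/ a = m%:Z + 1 - k%:Z -> ~ inversion a k w.
  move=> km gk a_end inv; apply: nfar; rewrite /far_inversion -bigcup_seq_cond.
  exists (Ordinal km); first by rewrite /= mem_index_enum.
  by case: a_end => <-; [left|right].
have [k1 k1E /andP[_ k1m]] := @int_between_natz (i + m%:Z) (2 * m).+2 ltac:(lia).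
have [k2 k2E /andP[_ k2m]] := @int_between_natz (m%:Z + 1 - i) (2 * m).+2 ltac:(lia).
apply/andP; split; rewrite ltNge le_eqVlt negb_or (inj_eq (@Sigma_inj w)).
  apply/andP; split; first by lia.
  apply/negP => lt; apply: (no_inv k1 (- m%:Z)) => //; first by rewrite -k1E in gap_l.
    by left.
  by rewrite /inversion k1E (_ : - m%:Z + (i + m%:Z) = i) //; lia.
apply/andP; split; first by lia.
apply/negP => lt; apply: (no_inv k2 i) => //; first by rewrite -k2E in gap_r.
  by right; lia.
by rewrite /inversion k2E (_ : i + (m%:Z + 1 - i) = m%:Z + 1) //; lia.
Qed.

End WindowEvents.
Arguments pattern_event {d T} Sigma a n p.

Section MallowsWindows.
Variables (R : realType) (q : R) (d : measure_display) (T : measurableType d)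
  (P : probability T R) (Sigma : T -> int -> int).
Hypotheses (q_gt0 : 0 < q) (q_lt1 : q < 1).
Hypothesis Sigma_inj : forall w, injective (Sigma w).
Hypothesis Sigma_meas : forall i j : int, measurable [set w | Sigma w i = j].
Hypothesis Sigma_mallows : forall a n (p : 'S_n),
  P (pattern_event Sigma a n p) = (mallows_prob q p)%:E.

Local Notation head_ge_event := (head_ge_event Sigma).
Local Notation last_le_event := (last_le_event Sigma).
Local Notation inversion := (inversion Sigma).
Local Notation far_inversion := (far_inversion R Sigma).

Let measurable_inv := measurable_inversion Sigma_meas.

Lemma head_ge_event_le a n t : (P (head_ge_event a n t) <= (q ^+ t)%:E)%E.
Proof.
have mP := @measurable_pattern_event _ _ _ Sigma_meas a n.+1.
apply: le_trans (measure_bigsetU_le P _ _ mP) _.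
rewrite (eq_bigr (fun p => (mallows_prob q p)%:E)) => [|p _]; last exact: Sigma_mallows.
by rewrite sumEFin lee_fin mallows_head_ge.
Qed.

Lemma last_le_event_le a n t : (t <= n)%N ->
  (P (last_le_event a n t) <= (q ^+ t)%:E)%E.
Proof.
move=> tn; have mP := @measurable_pattern_event _ _ _ Sigma_meas a n.+1.
apply: le_trans (measure_bigsetU_le P _ _ mP) _.
rewrite (eq_bigr (fun p => (mallows_prob q p)%:E)) => [|p _]; last exact: Sigma_mallows.
by rewrite sumEFin lee_fin mallows_last_le.
Qed.

Lemma inversion_le a n : (P (inversion a n) <= (2 * expR (ln q * (n%:R / 2)))%:E)%E.
Proof.
case: n => [|n].
  apply: le_trans (probability_le1 _ (measurable_inv _ _)) _.
  by rewrite mul0r mulr0 expR0 lee_fin; lra.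
set h := (n.+2)./2.
have h_range : (0 < h <= n.+2)%N by rewrite /h; have := leq_half_double n.+2; lia.
have mH := measurable_head_ge_event Sigma_meas a n.+1 h.
have mL := measurable_last_le_event Sigma_meas a n.+1 (n.+2 - h).
apply: le_trans (le_measure _ _ _ (inversion_sub Sigma_inj h_range)) _.
- by rewrite inE; exact: measurable_inv.
- by rewrite inE; exact: measurableU.
apply: le_trans (measureU2 _ mH mL) _.
rewrite mulr_natl mulr2n EFinD; apply: leeD.
- apply: le_trans (head_ge_event_le _ _ _) _.
  rewrite lee_fin expr_le_expR_ln ?(ltW q_lt1) //.
  by rewrite ler_pdivrMr // -natrM ler_nat /h; have := odd_double_half n.+2; lia.
- apply: le_trans (last_le_event_le _ _) _; first by rewrite /h; lia.
  rewrite lee_fin expr_le_expR_ln ?(ltW q_lt1) //.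
  by rewrite ler_pdivrMr // -natrM ler_nat /h; have := odd_double_half n.+2; lia.
Qed.

Lemma far_inversion_le m :
  (P (far_inversion m) <= (8 * m.+1%:R * expR (ln q * (log_gap R m / 2)))%:E)%E.
Proof.
set E := expR (ln q * (log_gap R m / 2)).
apply: le_trans (measure_bigsetU_le P _ _ (fun k : 'I_(2 * m).+2 =>
  measurableU _ _ (measurable_inv _ k) (measurable_inv _ k))) _.
apply: (@le_trans _ _
  (\sum_(k < (2 * m).+2 | log_gap R m <= (k : nat)%:R) (4 * E)%:E)).
  apply: lee_sum => k gap_k.
  apply: le_trans (measureU2 _ (measurable_inv _ _) (measurable_inv _ _)) _.
  have inv_E a : (P (inversion a k) <= (2 * E)%:E)%E.
    apply: le_trans (inversion_le _ _) _; rewrite lee_fin ler_pM2l // ler_expR.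
    by rewrite ler_wnM2l ?ln_le0 ?(ltW q_lt1) // ler_pM2r.
  by apply: le_trans (leeD (inv_E _) (inv_E _)) _; rewrite -EFinD lee_fin; lra.
rewrite sumEFin lee_fin big_mkcond /=.
apply: le_trans (_ : \sum_(k < (2 * m).+2) 4 * E <= _).
  by apply: ler_sum => k _; case: ifP => _ //; rewrite mulr_ge0 // expR_ge0.
rewrite big_const_ord iter_addr addr0 -(mulr_natr (4 * E)).
have -> : ((2 * m).+2%:R : R) = 2 * m.+1%:R by rewrite -natrM; congr _%:R; lia.
by rewrite le_eqVlt; apply/orP; left; apply/eqP; ring.
Qed.

Lemma far_inversion_summable : (\sum_(m <oo) P (far_inversion m) < +oo)%E.
Proof.
have [K HK] := min_decay_le_telescope q_gt0 q_lt1.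
apply: (@nneseries_telescope_lt_pinfty _ K) => [m|m]; first exact: measure_ge0.
have := HK m; rewrite -lee_fin EFin_min => /(le_trans _); apply.
rewrite le_min far_inversion_le andbT probability_le1 //.
exact: (measurable_far_inversion R Sigma_meas).
Qed.

End MallowsWindows.

Theorem lemma5p1 (R : realType) (q : R) (hq0 : 0 < q) (hq1 : q < 1)
  (d : measure_display) (T : measurableType d) (P : probability T R)
  (Sigma : T -> int -> int)
  (Sbij : forall w, bijective (Sigma w))
  (Smeas : forall i j : int, measurable [set w | Sigma w i = j])
  (Smallows : forall (a : int) (n : nat) (p : 'S_n),
     P [set w | forall k : 'I_n, pattern (Sigma w) a n (a + (k : nat)%:Z)
                                 = a + (p k : nat)%:Z]
     = (mallows_prob q p)%:E)
  (Sconv : {ae P, forall w, forall i : int, exists M : nat, forall n : nat,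
     (M <= n)%N -> pattern (Sigma w) (- (n%:Z)) (2 * n).+1 i = Sigma w i}) :
  {ae P, forall w, exists N : nat, forall n : nat, (N <= n)%N ->
     forall i : int, (`|i|%:~R : R) <= n%:R - (ln (n%:R : R)) ^+ 2 ->
       pattern (Sigma w) (- (n%:Z)) (2 * n).+1 i = Sigma w i /\
       pattern (Sigma w) (1 - n%:Z) (2 * n) i = Sigma w i}.
Proof.
have Sinj w : injective (Sigma w) := bij_inj (Sbij w).
have far_sum := far_inversion_summable hq0 hq1 Sinj Smeas Smallows.
have := ae_eventually_notin (measurable_far_inversion R Smeas) far_sum.
apply: filterS2 Sconv => w conv [n0 sep].
exists (maxn 2 n0) => n; rewrite geq_max => /andP[n2 n0n] i hi.
apply: pattern_window_limit (conv i) => m nm.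
have [im gap_l gap_r] := log_gap_le_dist n2 nm hi.
exact: (not_far_inversion_separates Sinj (sep m (leq_trans n0n nm))).
Qed.
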